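(* Let $E$ be a regular biordered set satisfying: (E1) there exists $0\in E$ with $0\,\omega\,e$ for every $e\in E$; (E2) there is a map $e\mapsto e'$ on $E$ such that for all $e,f\in E$: (i) $(e')'=e$; (ii) $f\,\omega^l\,e$ iff $e'\,\omega^r\,f'$; (iii) $f\,\omega^l\,e'$ iff $M(f,e)=\{0\}$. Let $S$ be a regular semigroup generated by its idempotents whose biordered set of idempotents is $E$. Then for each $e\in E$, $\{x\in S: xe=0\}=Se'$ and $\{x\in S: ex=0\}=e'S$.
   Context: For a semigroup $S$, its biordered set is the set of idempotents with product $ef$ (computed in $S$) defined when $\{ef,fe\}\cap\{e,f\}\ne\emptyset$. A semigroup is regular if for every $x$ there is $y$ with $xyx=x$; a regular biordered set is one isomorphic to the biordered set of some regular semigroup. In $E$: $\omega^l=\{(e,f): ef=e\}$, $\omega^r=\{(e,f): fe=e\}$, $\omega=\omega^l\cap\omega^r$, $M(e,f)=\{g\in E: g\,\omega^l\,e,\ g\,\omega^r\,f\}$. Here $0$ denotes the element of $E$ given by (E1). *)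

(* a semigroup is a carrier type S with an associative binary
   operation [mul]; its biordered set E(S) is the set of idempotents. *)

Section SG.
Variable S : Type.
Variable mul : S -> S -> S.

Definition idem (e : S) : Prop := mul e e = e.

Definition omega_l (e f : S) : Prop := mul e f = e.
Definition omega_r (e f : S) : Prop := mul f e = e.
Definition omega (e f : S) : Prop := omega_l e f /\ omega_r e f.

Definition Mset (e f : S) (g : S) : Prop := idem g /\ omega_l g e /\ omega_r g f.

Definition regular_semigroup : Prop := forall x, exists y, mul (mul x y) x = x.

Inductive idem_product : S -> Prop :=
| ip_idem : forall e, idem e -> idem_product e
| ip_mul : forall x e, idem_product x -> idem e -> idem_product (mul x e).

Definition idempotent_generated : Prop := forall x, idem_product x.
End SG.

Arguments idem {S} mul e.
Arguments omega_l {S} mul e f.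
Arguments omega_r {S} mul e f.
Arguments omega {S} mul e f.
Arguments Mset {S} mul e f g.
Arguments regular_semigroup {S} mul.
Arguments idempotent_generated {S} mul.

(* Since S is generated by idempotents and 0 lies below every idempotent, 0 is
   a zero of S. If [fe = 0] for idempotents e, f, then every g in M(f,e)
   satisfies [g = g g = g f e g = 0], so M(f,e) = {0} and (E2)(iii) gives
   [f e' = f]. For [x e = 0], apply this to the idempotent [f = x' x] built
   from an inverse x' of x: then [x = x f = x f e'] lies in S e'. The dual
   statement follows in the same way via (E2)(ii). Conversely [e' e = 0],
   because in a regular semigroup [e' e = e' h e] for some h in M(e', e),
   which is {0} by (E2)(iii) applied to the idempotent e'. *)

From Stdlib Require Import Setoid.

Section Semigroup.

Variables (S : Type) (mul : S -> S -> S).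
Hypothesis massoc : forall x y z, mul x (mul y z) = mul (mul x y) z.

Local Infix "⋅" := mul (at level 40, left associativity).

Lemma idem_product_absorbs (z : S) :
  (forall e, idem mul e -> omega mul z e) ->
  forall x, idem_product S mul x -> z ⋅ x = z /\ x ⋅ z = z.
Proof.
  intros below x hx.
  induction hx as [e he | x e _ [IHl IHr] he]; [exact (below e he) |].
  destruct (below e he) as [Hl Hr]. split.
  - rewrite massoc, IHl; exact Hl.
  - rewrite <- massoc, Hr; exact IHr.
Qed.

Lemma idem_mul_inverse_l (x y : S) : x ⋅ y ⋅ x = x -> idem mul (y ⋅ x).
Proof.
  intro Hx. unfold idem.
  rewrite massoc, <- (massoc y x y), <- massoc, Hx. reflexivity.
Qed.

Lemma idem_mul_inverse_r (x y : S) : x ⋅ y ⋅ x = x -> idem mul (x ⋅ y).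
Proof. intro Hx. unfold idem. rewrite massoc, Hx. reflexivity. Qed.

Lemma regular_exists_inverse (c : S) :
  (exists y, c ⋅ y ⋅ c = c) -> exists x, c ⋅ x ⋅ c = c /\ x ⋅ c ⋅ x = x.
Proof.
  intros [y Hy]. exists (y ⋅ c ⋅ y).
  assert (Hyc : forall z, z ⋅ c ⋅ y ⋅ c = z ⋅ c)
    by (intro z; rewrite <- !massoc, (massoc c y c), Hy; reflexivity).
  split; rewrite !massoc.
  - rewrite Hy, Hy. reflexivity.
  - rewrite !Hyc. reflexivity.
Qed.

(* The element [e x f], for an inverse x of [f e], is the classical sandwich
   element of (f, e). *)
Lemma mul_factors_through_Mset (e f : S) :
  idem mul e -> idem mul f -> (exists y, f ⋅ e ⋅ y ⋅ (f ⋅ e) = f ⋅ e) ->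
  exists h, Mset mul f e h /\ f ⋅ e = f ⋅ h ⋅ e.
Proof.
  intros he hf hfe.
  destruct (regular_exists_inverse (f ⋅ e) hfe) as [x [Hcxc Hxcx]].
  rewrite !massoc in Hcxc, Hxcx.
  assert (Hzx : forall z, z ⋅ x ⋅ f ⋅ e ⋅ x = z ⋅ x).
  { intro z. transitivity (z ⋅ (x ⋅ f ⋅ e ⋅ x)); [rewrite !massoc |]; congruence. }
  exists (e ⋅ x ⋅ f). unfold Mset, idem, omega_l, omega_r in *.
  split; [split; [| split] |]; rewrite ?massoc.
  - rewrite Hzx. reflexivity.
  - rewrite <- massoc, hf. reflexivity.
  - rewrite he. reflexivity.
  - symmetry. exact Hcxc.
Qed.

Section ZeroAndComplement.

Variable zero : S.
Hypothesis mul0s : forall x, zero ⋅ x = zero.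
Hypothesis muls0 : forall x, x ⋅ zero = zero.

Lemma Mset_eq_zero_of_mul0 (e f : S) :
  f ⋅ e = zero -> forall g, Mset mul f e g <-> g = zero.
Proof.
  intros Hfe g. unfold Mset, idem, omega_l, omega_r. split.
  - intros [hg [Hgf Heg]].
    rewrite <- hg, <- Hgf at 1. rewrite <- Heg, <- massoc, (massoc f e g), Hfe, mul0s.
    apply muls0.
  - intros ->. split; [| split]; [apply mul0s | apply mul0s | apply muls0].
Qed.

Variable pr : S -> S.
Hypothesis E2i : forall e, idem mul e -> pr (pr e) = e.
Hypothesis E2ii : forall e f, idem mul e -> idem mul f ->
  (omega_l mul f e <-> omega_r mul (pr e) (pr f)).
Hypothesis E2iii : forall e f, idem mul e -> idem mul f ->
  (omega_l mul f (pr e) <-> (forall g, Mset mul f e g <-> g = zero)).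

Lemma omega_l_pr_of_mul0 (e f : S) :
  idem mul e -> idem mul f -> f ⋅ e = zero -> omega_l mul f (pr e).
Proof. intros he hf Hfe. apply (E2iii e f he hf), Mset_eq_zero_of_mul0, Hfe. Qed.

Hypothesis hpr : forall e, idem mul e -> idem mul (pr e).

Lemma omega_r_pr_of_mul0 (e f : S) :
  idem mul e -> idem mul f -> e ⋅ f = zero -> omega_r mul f (pr e).
Proof.
  intros he hf Hef.
  apply (omega_l_pr_of_mul0 f e hf he), (E2ii (pr f) e (hpr f hf) he) in Hef.
  rewrite (E2i f hf) in Hef. exact Hef.
Qed.

Hypothesis hreg : regular_semigroup mul.

Lemma mul_pr_idem (e : S) : idem mul e -> pr e ⋅ e = zero.
Proof.
  intro he.
  destruct (mul_factors_through_Mset e (pr e) he (hpr e he) (hreg _)) as [h [Hh ->]].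
  apply (proj1 (E2iii e (pr e) he (hpr e he)) (hpr e he)) in Hh.
  rewrite Hh, muls0. apply mul0s.
Qed.

Lemma mul_idem_pr (e : S) : idem mul e -> e ⋅ pr e = zero.
Proof.
  intro he. rewrite <- (E2i e he) at 1. exact (mul_pr_idem (pr e) (hpr e he)).
Qed.

Lemma left_annihilator_pr (e x : S) : idem mul e -> x ⋅ e = zero <-> exists y, x = y ⋅ pr e.
Proof.
  intro he. split.
  - intro Hx. destruct (hreg x) as [x' Hx'].
    assert (Hfe : x' ⋅ x ⋅ e = zero) by (rewrite <- massoc, Hx; apply muls0).
    pose proof (omega_l_pr_of_mul0 e _ he (idem_mul_inverse_l x x' Hx') Hfe) as Hf.
    exists x. unfold omega_l in Hf.
    rewrite <- Hx', <- massoc, <- massoc, Hf. reflexivity.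
  - intros [y ->]. rewrite <- massoc, (mul_pr_idem e he). apply muls0.
Qed.

Lemma right_annihilator_pr (e x : S) : idem mul e -> e ⋅ x = zero <-> exists y, x = pr e ⋅ y.
Proof.
  intro he. split.
  - intro Hx. destruct (hreg x) as [x' Hx'].
    assert (Hef : e ⋅ (x ⋅ x') = zero) by (rewrite massoc, Hx; apply mul0s).
    pose proof (omega_r_pr_of_mul0 e _ he (idem_mul_inverse_r x x' Hx') Hef) as Hf.
    exists x. unfold omega_r in Hf.
    rewrite <- Hx', massoc, Hf. reflexivity.
  - intros [y ->]. rewrite massoc, (mul_idem_pr e he). apply mul0s.
Qed.

End ZeroAndComplement.
End Semigroup.

Theorem lemma3p3 (S : Type) (mul : S -> S -> S)
  (massoc : forall x y z, mul x (mul y z) = mul (mul x y) z)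
  (hreg : regular_semigroup mul)
  (hgen : idempotent_generated mul)
  (zero : S) (hzero : idem mul zero)
  (E1 : forall e, idem mul e -> omega mul zero e)
  (pr : S -> S) (hpr : forall e, idem mul e -> idem mul (pr e))
  (E2i : forall e, idem mul e -> pr (pr e) = e)
  (E2ii : forall e f, idem mul e -> idem mul f ->
            (omega_l mul f e <-> omega_r mul (pr e) (pr f)))
  (E2iii : forall e f, idem mul e -> idem mul f ->
            (omega_l mul f (pr e) <-> (forall g, Mset mul f e g <-> g = zero))) :
  forall e, idem mul e ->
    (forall x, mul x e = zero <-> exists y, x = mul y (pr e)) /\
    (forall x, mul e x = zero <-> exists y, x = mul (pr e) y).
Proof.
  intros e he.
  pose proof (fun x => idem_product_absorbs S mul massoc zero E1 x (hgen x)) as Hzero.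
  assert (mul0s : forall x, mul zero x = zero) by (intro x; apply Hzero).
  assert (muls0 : forall x, mul x zero = zero) by (intro x; apply Hzero).
  split; intro x.
  - exact (left_annihilator_pr S mul massoc zero mul0s muls0 pr E2iii hpr hreg e x he).
  - exact (right_annihilator_pr S mul massoc zero mul0s muls0 pr E2i E2ii E2iii hpr hreg e x he).
Qed.
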